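(* Let $L$ be a subspace of $\bigwedge^{k}V$ and let $I\subseteq[n]$. There is no infinite sequence of subspaces $L_0=L,L_1,L_2,\dots$ such that for each $s\ge 0$ there are $i_s<j_s$ in $I$ with $L_{s+1}=N_{j_s\to i_s}L_s$ and $L_{s+1}\neq L_s$. Equivalently, the procedure ''while there is a pair $i<j$ in $I$ with $N_{j\to i}L\neq L$, replace $L$ by $N_{j\to i}L$'' terminates for every choice of such non-fixing slow shifts.
   Context: $\mathbb{F}$ is a field (assumed throughout the paper, for expository purposes, to have characteristic not $2$), $V$ is an $n$-dimensional $\mathbb{F}$-vector space with a fixed basis $e_1,\dots,e_n$, and $\bigwedge V=\bigoplus_k\bigwedge^kV$ is its exterior algebra, with $\bigwedge^kV$ having the monomial basis $e_S=e_{s_1}\wedge\cdots\wedge e_{s_k}$, $S=\{s_1<\cdots<s_k\}\subseteq[n]$. For $j\in[n]$, $V^{(j)}$ is the span of $\{e_h:h\neq j\}$, and $\bigwedge V^{(j)}$ is viewed as a subalgebra of $\bigwedge V$. Slow shift: for distinct $i,j\in[n]$ and nonzero $m\in\bigwedge^kV$, write uniquely $m=x+e_j\wedge y$ with $x\in\bigwedge^kV^{(j)}$, $y\in\bigwedge^{k-1}V^{(j)}$, and set $N_{j\to i}m=x+e_i\wedge y$ if this is nonzero, and $N_{j\to i}m=e_j\wedge y$ otherwise (this is, up to scalar, the limit as $t\to 0$ of the action on $\mathbb{P}(\bigwedge^kV)$ of the linear map sending $e_j\mapsto e_i+te_j$ and fixing the other $e_h$, obtained by evaluating at $t=0$ the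 representative with polynomial coefficients having no common factor of positive $t$-degree). For a subspace $L$ of $\bigwedge^kV$, $N_{j\to i}L$ is the span of $\{N_{j\to i}m: m\in L\setminus\{0\}\}$; it has the same dimension as $L$. *)

From HB Require Import structures.
From mathcomp Require Import all_boot all_order all_algebra.
Set Implicit Arguments. Unset Strict Implicit. Unset Printing Implicit Defensive.
Import GRing.Theory.
Local Open Scope ring_scope.

(* The exterior algebra /\V of V = F^n with basis e_1..e_n, in coordinates:
   an element is a function assigning to every subset A of [n] the
   coefficient of the monomial e_S. *)
Definition extalg (F : fieldType) (n : nat) := {ffun {set 'I_n} -> F^o}.

(* Sign of e_S /\ e_T = sign A B * e_(A u B) for disjoint A, B:
   (-1)^(number of pairs (s,t) in A x B with t < s). *)
Definition wsign (F : fieldType) (n : nat) (A B : {set 'I_n}) : F :=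
  (-1) ^+ #|[set p : 'I_n * 'I_n | [&& p.1 \in A, p.2 \in B & (p.2 < p.1)%N]]|.

Definition wedge (F : fieldType) (n : nat) (a b : extalg F n) : extalg F n :=
  [ffun U : {set 'I_n} => \sum_(A : {set 'I_n}) \sum_(B : {set 'I_n})
     (if (A :&: B == set0) && (A :|: B == U)
      then (wsign F A B * a A * b B : F^o) else 0)].

Definition emon (F : fieldType) (n : nat) (A : {set 'I_n}) : extalg F n :=
  [ffun U : {set 'I_n} => ((U == A)%:R : F^o)].
Definition evec (F : fieldType) (n : nat) (i : 'I_n) : extalg F n :=
  emon F [set i].

Definition wedgek (F : fieldType) (n k : nat) : {vspace extalg F n} :=
  <<[seq emon F A | A <- enum [set A : {set 'I_n} | #|A| == k]]>>%VS.

(* The unique decomposition m = x + e_j /\ y with x, y in /\V^(j)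
   (i.e. supported on monomials not involving e_j). *)
Definition split_x (F : fieldType) (n : nat) (j : 'I_n) (m : extalg F n)
  : extalg F n := [ffun U : {set 'I_n} => if j \in U then 0 else m U].
Definition split_y (F : fieldType) (n : nat) (j : 'I_n) (m : extalg F n)
  : extalg F n :=
  [ffun B : {set 'I_n} => if j \in B then 0 else (wsign F [set j] B * m (j |: B) : F^o)].

Definition slow_shift (F : fieldType) (n : nat) (j i : 'I_n) (m : extalg F n)
  : extalg F n :=
  let v := split_x j m + wedge (evec F i) (split_y j m) in
  if v != 0 then v else wedge (evec F j) (split_y j m).

(* L' = N_{j -> i} L, i.e. L' is the span of { N_{j->i} m : m in L, m <> 0 }
   (characterized as the smallest subspace containing all these vectors). *)
Definition is_slow_shift_space (F : fieldType) (n : nat) (j i : 'I_n)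
  (L L' : {vspace extalg F n}) : Prop :=
  (forall m, m \in L -> m != 0 -> slow_shift j i m \in L') /\
  (forall U : {vspace extalg F n},
     (forall m, m \in L -> m != 0 -> slow_shift j i m \in U) -> (L' <= U)%VS).

From HB Require Import structures.
From mathcomp Require Import all_boot all_order all_algebra.
From mathcomp Require Import ring zify.
From Stdlib Require Import Classical.
Set Implicit Arguments. Unset Strict Implicit. Unset Printing Implicit Defensive.
Import GRing.Theory.
Local Open Scope ring_scope.

(* Call a set A of monomials a coordinate basis of a subspace L of /\V when
   the coordinates indexed by A restrict to an isomorphism on L; these are the
   bases of the matroid of L (the support of its Pluecker vector).  Weigh a
   monomial e_S by the sum of the indices in S.  For i < j and L' = N_{j->i} L,
   writing m = x + e_j /\ y, the space L' is spanned by the vectors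
   x + e_i /\ y together with e_j /\ y for those m where x + e_i /\ y = 0, so
   it splits along the monomials containing e_j and all its coordinate bases
   contain the same number of such monomials.  Expanding the coordinate
   functionals of a basis B of L' back on L shows that replacing some monomials
   S of B by S - i + j yields a coordinate basis of L: either B itself, or a
   heavier set with more monomials containing e_j, hence not a basis of L'.
   If L and L' have the same bases then L splits as well and both parts lie in
   L', so L' = L.  Thus each nontrivial shift makes the family of coordinate
   bases decrease in the multiset extension of the weight order, which is
   well founded. *)

Section NatSums.
Local Open Scope nat_scope.

Lemma sum_expn_lt_dominated (T : finType) (w : T -> nat) (K : nat) (A B : {set T}) :
  #|T| < K -> A != B ->
  (forall x, x \in A :\: B -> exists2 y, y \in B :\: A & w x < w y) ->
  \sum_(x in A) K ^ w x < \sum_(y in B) K ^ w y.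
Proof.
move=> ltTK neqAB dom; have K_gt0 : 0 < K by apply: leq_ltn_trans ltTK.
rewrite (big_setID B) [X in _ < X](big_setID A) /= setIC ltn_add2l.
have BA_gt0 : 0 < #|B :\: A|.
  have [AB0|[x xAB]] := set_0Vmem (A :\: B); last first.
    by have [y yBA _] := dom x xAB; apply/card_gt0P; exists y.
  rewrite card_gt0; apply: contra neqAB => /eqP BA0.
  by rewrite eqEsubset -setD_eq0 AB0 -setD_eq0 BA0 !eqxx.
have [y1 y1BA y1max] := eq_bigmax_cond w BA_gt0.
set M := \max_(y in B :\: A) w y in y1max.
have ltAB_K : #|A :\: B| < K by apply: leq_ltn_trans (max_card _) ltTK.
rewrite -(ltn_pmul2r K_gt0); apply: (@leq_ltn_trans (#|A :\: B| * K ^ M)).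
  rewrite big_distrl /= -sum_nat_const; apply: leq_sum => x xAB.
  have [y yBA lt_xy] := dom x xAB.
  by rewrite -expnSr leq_pexp2l // (leq_trans lt_xy) // leq_bigmax_cond.
apply: (@leq_trans (K * K ^ M)); first by rewrite ltn_pmul2r ?expn_gt0 ?K_gt0.
by rewrite mulnC leq_pmul2r // (bigD1 y1) //= -y1max leq_addr.
Qed.

Lemma sum_lt_imset (T : finType) (g : T -> nat) (d : T -> T) (B : {set T}) x0 :
  {in B &, injective d} -> {in B, forall x, g x <= g (d x)} ->
  x0 \in B -> g x0 < g (d x0) ->
  \sum_(x in B) g x < \sum_(y in d @: B) g y.
Proof.
move=> injd le_gd x0B lt_gd; rewrite big_imset //= (bigD1 x0) // [X in _ < X](bigD1 x0) //=.
by rewrite -addSn leq_add // leq_sum // => x /andP[xB _]; apply: le_gd.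
Qed.

Lemma no_nat_descent (f : nat -> nat) : ~ (forall s, f s.+1 < f s).
Proof.
move=> desc; have bound s : f s + s <= f 0.
  by elim: s => [|s IHs]; rewrite ?addn0 // addnS (leq_trans _ IHs) // ltn_add2r.
by have := bound (f 0).+1; rewrite addnS ltnNge leq_addl.
Qed.

Lemma card_setI_sum (T : finType) (A J : {set T}) :
  #|A :&: J| = \sum_(x in A) (x \in J).
Proof.
rewrite -sum1_card [LHS]big_mkcond [RHS]big_mkcond; apply: eq_bigr => x _.
by rewrite inE; case: (x \in A); case: (x \in J).
Qed.

End NatSums.

Section Coordinates.
Variables (F : fieldType) (T : finType).
(* The cast makes every [\dim] below go through the same vectType instance,
   which [lia] relies on to identify them. *)
Local Notation V := ({ffun T -> F^o} : vectType F).
Implicit Types (A B J : {set T}) (L : {vspace V}) (m : V).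

Definition restr A m : V := [ffun x => if x \in A then m x else 0].

Lemma restr_is_semilinear A : semilinear (restr A).
Proof.
by split=> [a u|u v]; apply/ffunP=> x; rewrite !ffunE; case: ifP; rewrite ?scaler0 ?addr0.
Qed.

HB.instance Definition _ A :=
  GRing.isSemilinear.Build F V V _ (restr A) (restr_is_semilinear A).

Definition restrf A : 'End(V) := linfun (restr A).

Lemma restrfE A m : restrf A m = restr A m.
Proof. exact: lfunE. Qed.

Lemma restrK A m : restr A (restr A m) = restr A m.
Proof. by apply/ffunP=> x; rewrite !ffunE; case: (x \in A). Qed.

Lemma restr_addC A m : restr A m + restr (~: A) m = m.
Proof. by apply/ffunP=> x; rewrite !ffunE inE; case: (x \in A); rewrite ?addr0 ?add0r. Qed.

Definition vanishing A : {vspace V} := lker (restrf A).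

Lemma vanishingP A m : reflect {in A, forall x, m x = 0} (m \in vanishing A).
Proof.
rewrite memv_ker restrfE; apply: (iffP eqP) => [/ffunP m0 x xA|m0].
  by have := m0 x; rewrite !ffunE xA.
by apply/ffunP=> x; rewrite !ffunE; case: ifP => // /m0.
Qed.

Lemma restr_vanishing A m : restr A m \in vanishing (~: A).
Proof. by apply/vanishingP=> x; rewrite inE ffunE => /negbTE->. Qed.

Lemma vanishingU A B : vanishing (A :|: B) = (vanishing A :&: vanishing B)%VS.
Proof.
apply/vspaceP=> m; rewrite memv_cap; apply/vanishingP/andP => [m0|[]].
  by split; apply/vanishingP => x xA; apply: m0; rewrite inE xA ?orbT.
by move=> /vanishingP mA /vanishingP mB x; rewrite inE => /orP[/mA|/mB].
Qed.

Definition separating L A : bool := (L :&: vanishing A == 0)%VS.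

Lemma separatingP L A :
  reflect (forall m, m \in L -> {in A, forall x, m x = 0} -> m = 0) (separating L A).
Proof.
apply: (iffP eqP) => [L0 m mL /vanishingP mA|sepA].
  by apply/eqP; rewrite -memv0 -L0 memv_cap mL.
apply/eqP; rewrite -subv0; apply/subvP=> m /memv_capP[mL /vanishingP mA].
by rewrite memv0 (sepA m).
Qed.

Lemma dim_le_card_separating L A : separating L A -> (\dim L <= #|A|)%N.
Proof.
move=> /eqP sepA; rewrite -(limg_dim_eq sepA).
pose e x : V := [ffun y => (y == x)%:R].
have restr_span m : restr A m \in <<[seq e x | x <- enum A]>>%VS.
  have -> : restr A m = \sum_(x in A) m x *: e x.
    apply/ffunP=> y; rewrite ffunE sum_ffunE.
    rewrite (eq_bigr (fun x => (x == y)%:R * m x)) => [|x _]; last first.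
      by rewrite !ffunE mulrC eq_sym.
    case: ifPn => yA.
      rewrite (bigD1 y) //= eqxx mul1r big1 ?addr0 // => x /andP[_ /negbTE->].
      by rewrite mul0r.
    by rewrite big1 // => x xA; case: eqP => [xy|_]; [rewrite -xy xA in yA | rewrite mul0r].
  by apply: memv_suml => x xA; rewrite memvZ // memv_span // map_f // mem_enum.
have img_sub : (restrf A @: L <= <<[seq e x | x <- enum A]>>)%VS.
  by apply/subvP=> _ /memv_imgP[m _ ->]; rewrite restrfE.
by rewrite (leq_trans (dimvS img_sub)) // (leq_trans (dim_span _)) // size_map -cardE.
Qed.

Lemma exists_separating L : exists2 A, separating L A & (#|A| <= \dim L)%N.
Proof.
have [d leLd] : exists d, (\dim L <= d)%N by exists (\dim L).
elim: d L leLd => [|d IHd] L leLd.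
  move: leLd; rewrite leqn0 dimv_eq0 => /eqP->.
  by exists set0; rewrite ?cards0 // /separating cap0v.
have [->|nzL] := eqVneq L 0%VS; first by exists set0; rewrite ?cards0 // /separating cap0v.
have /existsP[x vx] : [exists x, vpick L x != 0].
  apply: contraR nzL; rewrite negb_exists => /forallP v0.
  by rewrite -vpick0; apply/eqP/ffunP=> x; rewrite ffunE; apply/eqP/negbNE/v0.
have ltL0 : (\dim (L :&: vanishing [set x]) < \dim L)%N.
  rewrite (ltn_leqif (dimv_leqif_eq (capvSl _ _))); apply: contraNneq vx => eqL0.
  have /memv_capP[_ /vanishingP v0] : vpick L \in (L :&: vanishing [set x])%VS.
    by rewrite eqL0 memv_pick.
  by rewrite v0 ?set11.
have [A0 sepA0 leA0] := IHd _ (leq_trans ltL0 leLd).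
exists (x |: A0); first by rewrite /separating vanishingU capvA.
by rewrite cardsU1 (leq_trans (leq_add (leq_b1 _) leA0)) // add1n.
Qed.

Definition coord_bases L : {set {set T}} :=
  [set A | separating L A && (#|A| == \dim L)].

Lemma coord_basesP L A :
  reflect (separating L A /\ #|A| = \dim L) (A \in coord_bases L).
Proof. by rewrite inE; apply: (iffP andP) => [[-> /eqP]|[-> ->]]. Qed.

Lemma coord_basis_of_separating L A :
  separating L A -> (#|A| <= \dim L)%N -> A \in coord_bases L.
Proof.
move=> sepA leA; apply/coord_basesP; split=> //.
by apply/eqP; rewrite eqn_leq leA dim_le_card_separating.
Qed.

Lemma sub_restr_add L J : (L <= restrf J @: L + restrf (~: J) @: L)%VS.
Proof. by apply/subvP=> m mL; rewrite -(restr_addC J m) -!restrfE memv_add ?memv_img. Qed.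

Lemma separating_restr L A J :
  (restrf J @: L <= L)%VS -> separating L A -> separating (restrf J @: L) (A :&: J).
Proof.
move=> stable /separatingP sepA; apply/separatingP=> _ /memv_imgP[m mL ->] m0.
apply: sepA; first by rewrite (subvP stable) ?memv_img.
move=> x xA; rewrite restrfE ffunE; case: ifP => // xJ.
by have := m0 x; rewrite inE xA xJ restrfE ffunE xJ => ->.
Qed.

Lemma exists_coord_basis_meet L J :
  exists2 A, A \in coord_bases L & #|A :&: J| = \dim (restrf J @: L).
Proof.
have [B1 sepB1 leB1] := exists_separating (restrf J @: L).
have [B2 sepB2 leB2] := exists_separating (L :&: vanishing J).
set A := (B1 :&: J) :|: (B2 :\: J).
have AJ : A :&: J = B1 :&: J.
  by apply/setP=> x; rewrite !inE; case: (x \in J); rewrite ?andbT ?andbF ?orbF.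
have AnJ : A :\: J = B2 :\: J.
  by apply/setP=> x; rewrite !inE; case: (x \in J); rewrite ?andbT ?andbF ?orbF.
have sepA : separating L A.
  apply/separatingP=> m mL mA.
  have mJ : restr J m = 0.
    apply: (separatingP _ _ sepB1); first by rewrite -restrfE memv_img.
    move=> x xB1; rewrite ffunE; case: ifP => // xJ.
    by apply: mA; rewrite !inE xB1 xJ.
  apply: (separatingP _ _ sepB2).
    by rewrite memv_cap mL /vanishing memv_ker restrfE mJ eqxx.
  move=> x xB2; case: (boolP (x \in J)) => xJ.
    by have := congr1 (fun v : V => v x) mJ; rewrite !ffunE xJ.
  by apply: mA; rewrite !inE xB2 xJ orbT.
have dimL : (\dim (L :&: vanishing J) + \dim (restrf J @: L) = \dim L)%N.
  exact: limg_ker_dim.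
have := dim_le_card_separating sepA; rewrite -(cardsID J A) AJ AnJ => geA.
have leB1J : (#|B1 :&: J| <= #|B1|)%N by rewrite subset_leq_card ?subsetIl.
have leB2J : (#|B2 :\: J| <= #|B2|)%N by rewrite subset_leq_card ?subsetDl.
exists A; last by rewrite AJ; lia.
by apply: coord_basis_of_separating; rewrite // -(cardsID J A) AJ AnJ; lia.
Qed.

Lemma restr_stableC L J :
  (restrf J @: L <= L)%VS -> (restrf (~: J) @: L <= L)%VS.
Proof.
move=> stable; apply/subvP=> _ /memv_imgP[m mL ->].
rewrite restrfE -[restr _ m](addKr (restr J m)) restr_addC memvD // memvN.
by rewrite (subvP stable) // -restrfE memv_img.
Qed.

Lemma card_meet_coord_basis L J A :
  (restrf J @: L <= L)%VS -> A \in coord_bases L -> #|A :&: J| = \dim (restrf J @: L).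
Proof.
move=> stable /coord_basesP[sepA cardA].
have stableC := restr_stableC stable.
have := dim_le_card_separating (separating_restr stable sepA).
have := dim_le_card_separating (separating_restr stableC sepA).
have := leq_trans (dimvS (sub_restr_add L J)) (dimv_add_leqif _ _).
by rewrite -cardA -(cardsID J A) setDE; lia.
Qed.

Lemma restr_stable_of_card_meet L J :
  {in coord_bases L &, forall A B, #|A :&: J| = #|B :&: J|} -> (restrf J @: L <= L)%VS.
Proof.
move=> eq_meet.
have [A bA eA] := exists_coord_basis_meet L J.
have [B bB eB] := exists_coord_basis_meet L (~: J).
have dimL : (\dim (restrf J @: L) + \dim (restrf (~: J) @: L) = \dim L)%N.
  case/coord_basesP: (bB) => _ <-.
  by rewrite -(cardsID J B) setDE -eA -eB (eq_meet A B).
have /eqP eqL : L == (restrf J @: L + restrf (~: J) @: L)%VS.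
  rewrite eqEdim sub_restr_add -[X in (_ <= X)%N]dimL.
  exact: dimv_add_leqif.
by rewrite [X in (_ <= X)%VS]eqL addvSl.
Qed.

Lemma two_term_linear (x y : T) (c a b : F) (u v : V) :
  (a *: u + b *: v) x + c * (a *: u + b *: v) y =
  a * (u x + c * u y) + b * (v x + c * v y).
Proof.
have combE z : (a *: u + b *: v) z = a * u z + b * v z by rewrite !ffunE.
by rewrite !combE; ring.
Qed.

Lemma separating_two_term (P : V -> Prop) (x y : T) (c : F) :
  (forall (u v : V) (a b : F), P u -> P v -> P (a *: u + b *: v)) ->
  (forall m, P m -> m x + c * m y = 0 -> m = 0) ->
  (forall m, P m -> m x = 0 -> m = 0) \/ (forall m, P m -> m y = 0 -> m = 0).
Proof.
move=> Plin sep; have [sepx|nsepx] := classic (forall m, P m -> m x = 0 -> m = 0).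
  by left.
right=> v Pv vy; apply: NNPP => nz_v; apply: nsepx => u Pu ux; apply: NNPP => nz_u.
pose f m := m x + c * m y.
have nz_f m : P m -> m <> 0 -> f m != 0 by move=> Pm nz_m; apply/eqP=> /(sep m Pm).
pose w := f v *: u + (- f u) *: v.
have w0 : w = 0 by apply: sep; [exact: Plin | rewrite two_term_linear /f; ring].
have := congr1 (fun m : V => m x) w0; rewrite !ffunE /= ux scaler0 add0r.
move=> /eqP; rewrite scaler_eq0 oppr_eq0 (negbTE (nz_f u Pu nz_u)) /= => /eqP vx.
by move: (nz_f v Pv nz_v); rewrite /f vx vy mulr0 addr0 eqxx.
Qed.

Lemma separating_choice_seq (P : V -> Prop) (I : eqType) (s : seq I)
    (a b : I -> T) (c : I -> F) :
  (forall (u v : V) (k l : F), P u -> P v -> P (k *: u + l *: v)) -> uniq s ->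
  (forall m, P m -> (forall t, t \in s -> m (a t) + c t * m (b t) = 0) -> m = 0) ->
  exists d : I -> T, (forall t, d t = a t \/ d t = b t) /\
    (forall m, P m -> (forall t, t \in s -> m (d t) = 0) -> m = 0).
Proof.
elim: s P => [|t0 s IHs] P Plin /=.
  by move=> _ sep; exists a; split=> [t|m Pm _]; [left | apply: sep].
case/andP=> t0s uniq_s sep.
pose P1 m := P m /\ forall t, t \in s -> m (a t) + c t * m (b t) = 0.
have P1lin (u v : V) (k l : F) : P1 u -> P1 v -> P1 (k *: u + l *: v).
  move=> [Pu fu] [Pv fv]; split=> [|t ts]; first exact: Plin.
  by rewrite two_term_linear fu ?fv ?mulr0 ?addr0.
have sep1 m : P1 m -> m (a t0) + c t0 * m (b t0) = 0 -> m = 0.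
  by move=> [Pm fm] f0; apply: sep => // t; rewrite in_cons => /predU1P[->|/fm].
have [y0 y0ab sep0] : exists2 y0, y0 = a t0 \/ y0 = b t0 &
    forall m, P1 m -> m y0 = 0 -> m = 0.
  have [sepa|sepb] := separating_two_term P1lin sep1.
    by exists (a t0); [left|].
  by exists (b t0); [right|].
pose P2 m := P m /\ m y0 = 0.
have P2lin (u v : V) (k l : F) : P2 u -> P2 v -> P2 (k *: u + l *: v).
  by move=> [Pu u0] [Pv v0]; split; [exact: Plin | rewrite !ffunE /= u0 v0 !scaler0 addr0].
have [d [dab sepd]] := IHs P2 P2lin uniq_s (fun m '(conj Pm m0) fm => sep0 m (conj Pm fm) m0).
exists (fun t => if t == t0 then y0 else d t); split=> [t|m Pm md].
  by case: eqP => [->|_]; [exact: y0ab | exact: dab].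
apply: sepd; first by split=> //; have := md t0; rewrite eqxx mem_head; apply.
move=> t ts; have := md t; rewrite in_cons ts orbT; case: eqP => [tt0|_]; last by apply.
by rewrite -tt0 ts in t0s.
Qed.

Lemma separating_choice L (I : finType) (B : {set I}) (a b : I -> T) (c : I -> F) :
  (forall m, m \in L -> {in B, forall t, m (a t) + c t * m (b t) = 0} -> m = 0) ->
  exists2 d : I -> T, (forall t, d t = a t \/ d t = b t) & separating L (d @: B).
Proof.
move=> sep; have Llin (u v : V) (k l : F) : u \in L -> v \in L -> k *: u + l *: v \in L.
  by move=> uL vL; rewrite memvD ?memvZ.
have [|d [dab sepd]] := separating_choice_seq (a := a) (b := b) (c := c) Llin (enum_uniq B).
  by move=> m mL fm; apply: sep => // t tB; apply: fm; rewrite mem_enum.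
exists d => //; apply/separatingP=> m mL m0; apply: sepd => // t.
by rewrite mem_enum => tB; apply: m0; rewrite imset_f.
Qed.

Definition coord_weight (w : T -> nat) (A : {set T}) : nat := \sum_(x in A) w x.

(* The base exceeds the number of sets of coordinates, so that comparing
   potentials refines the multiset extension of the weight order. *)
Definition coord_potential (w : T -> nat) L : nat :=
  \sum_(A in coord_bases L) #|{set T}|.+1 ^ coord_weight w A.
End Coordinates.

Arguments restrf {F T} A.
Arguments vanishing {F T} A.

Section SlowShift.
Variables (F : fieldType) (n : nat).
Local Notation X := {set 'I_n}.
Local Notation V := (extalg F n).

Lemma wsign_sqr (A B : X) : wsign F A B * wsign F A B = 1.
Proof. by rewrite -exprD addnn -mul2n exprM sqrrN !expr1n. Qed.

Lemma wedge_evecE (i : 'I_n) (b : V) U :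
  wedge (evec F i) b U = if i \in U then wsign F [set i] (U :\ i) * b (U :\ i) else 0.
Proof.
rewrite ffunE (bigD1 [set i]) //= [X in _ + X]big1 ?addr0 => [|A /negbTE neqA]; last first.
  by apply: big1 => B _; case: ifP => // _; rewrite ffunE neqA mulr0 mul0r.
under eq_bigr => B _ do rewrite ffunE eqxx mulr1.
case: ifPn => iU.
  rewrite (bigD1 (U :\ i)) //= big1 ?addr0 => [|B neqB]; last first.
    case: ifP => // /andP[/eqP/setP iB /eqP UB]; case/eqP: neqB.
    have := iB i; rewrite !inE eqxx => iNB.
    by apply/setP=> x; rewrite -UB !inE; case: eqP => [->|].
  have -> : [set i] :&: (U :\ i) = set0 by apply/setP=> x; rewrite !inE; case: eqP.
  by rewrite setD1K // !eqxx.
by apply: big1 => B _; case: ifP => // /andP[_ /eqP UB]; rewrite -UB setU11 in iU.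
Qed.

Definition index_sum (U : X) : nat := \sum_(s in U) (s : nat).

Variables i j : 'I_n.

Definition with_j : {set X} := [set U : X | j \in U].
Definition movable (U : X) : bool := (j \notin U) && (i \in U).
Definition raise (U : X) : X := if movable U then j |: (U :\ i) else U.
Definition raise_coef (U : X) : F :=
  if movable U then wsign F [set i] (U :\ i) * wsign F [set j] (U :\ i) else 0.
(* For m = x + e_j /\ y this is x + e_i /\ y, see [slow_shiftE]. *)
Definition lower (m : V) : V :=
  [ffun U : X => if j \in U then 0 else m U + raise_coef U * m (raise U)].

Lemma slow_shiftE m : i != j ->
  slow_shift j i m = if lower m != 0 then lower m else restr with_j m.
Proof.
move=> neq_ij; rewrite /slow_shift; cbv zeta.
have -> : split_x j m + wedge (evec F i) (split_y j m) = lower m.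
  apply/ffunP=> U; rewrite ffunE wedge_evecE !ffunE /raise_coef /raise /movable.
  case: (boolP (j \in U)) => jU /=.
    by rewrite add0r; case: ifP => // iU; rewrite !inE jU eq_sym neq_ij mulr0.
  case: ifP => iU; last by rewrite mul0r addr0.
  by rewrite !inE (negbTE jU) andbF mulrA.
have -> : wedge (evec F j) (split_y j m) = restr with_j m.
  apply/ffunP=> U; rewrite wedge_evecE !ffunE !inE.
  by case: ifP => // jU; rewrite eqxx mulrA wsign_sqr mul1r setD1K.
by [].
Qed.

Lemma lower_is_semilinear : semilinear lower.
Proof.
split=> [a u|u v]; apply/ffunP=> U; rewrite !ffunE; case: ifP => _.
- by rewrite scaler0.
- by rewrite scalerDr scalerAr.
- by rewrite addr0.
- by rewrite mulrDr addrACA.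
Qed.

HB.instance Definition _ :=
  GRing.isSemilinear.Build F V V _ lower lower_is_semilinear.

Definition lowerf : 'End(V) := linfun lower.

Lemma lowerfE m : lowerf m = lower m.
Proof. exact: lfunE. Qed.

Lemma lower_vanishing m : lower m \in vanishing with_j.
Proof. by apply/vanishingP=> U; rewrite inE ffunE => ->. Qed.

Lemma lower_id m : m \in vanishing with_j -> lower m = m.
Proof.
move=> /vanishingP m0; apply/ffunP=> U; rewrite ffunE /raise_coef /raise.
case: ifPn => jU; first by rewrite m0 ?inE.
case: ifP => _; last by rewrite mul0r addr0.
by rewrite (m0 (j |: U :\ i)) ?mulr0 ?addr0 // !inE eqxx.
Qed.

Lemma raise_coef_with_j U : U \in with_j -> raise_coef U = 0.
Proof. by rewrite inE /raise_coef /movable => ->. Qed.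

Hypothesis lt_ij : (i < j)%N.

Lemma raise_moved U : raise U != U ->
  [/\ U \notin with_j, raise U \in with_j & (index_sum U < index_sum (raise U))%N].
Proof.
rewrite /raise; case: ifP => [/andP[jU iU] _|_]; last by rewrite eqxx.
rewrite !inE jU eqxx; split=> //.
rewrite /index_sum (big_setD1 i iU) big_setU1 /= ?ltn_add2r //.
by rewrite !inE negb_and jU orbT.
Qed.

Lemma index_sum_raise U : (index_sum U <= index_sum (raise U))%N.
Proof.
by have [->|/raise_moved[_ _ /ltnW]] := eqVneq (raise U) U.
Qed.

Lemma with_j_raise U : ((U \in with_j) <= (raise U \in with_j))%N.
Proof.
by have [->|/raise_moved[/negbTE-> _ _]] := eqVneq (raise U) U.
Qed.

Lemma restr_lower m : restr with_j (lower m) = 0.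
Proof. by apply/eqP; rewrite -restrfE -memv_ker; apply: lower_vanishing. Qed.

Let neq_ij : i != j.
Proof. by rewrite neq_ltn lt_ij. Qed.

Variables L L' : {vspace V}.
Hypothesis shiftLL' : is_slow_shift_space j i L L'.

Lemma restr_stable_shift : (restrf with_j @: L' <= L')%VS.
Proof.
have /subvP sub : (L' <= L' :&: restrf with_j @^-1: L')%VS.
  apply: shiftLL'.2 => m mL nz_m; have := shiftLL'.1 _ mL nz_m.
  rewrite memv_cap -memv_preim restrfE slow_shiftE ?neq_ij //.
  by case: ifP => _; rewrite ?restr_lower ?restrK ?mem0v ?andbT ?andbb.
apply/subvP=> _ /memv_imgP[x /sub/memv_capP[_] + ->].
by rewrite -memv_preim.
Qed.

Lemma restr_shift_sub : (restrf with_j @: L' <= restrf with_j @: L)%VS.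
Proof.
have /subvP sub : (L' <= restrf with_j @^-1: (restrf with_j @: L))%VS.
  apply: shiftLL'.2 => m mL _; rewrite -memv_preim restrfE slow_shiftE ?neq_ij //.
  case: ifP => _; first by rewrite restr_lower mem0v.
  by rewrite restrK -restrfE memv_img.
by apply/subvP=> _ /memv_imgP[x /sub + ->]; rewrite -memv_preim.
Qed.

Lemma dim_shift_le : (\dim L' <= \dim L)%N.
Proof.
set K := (L :&: lker lowerf)%VS.
have sub : (L' <= lowerf @: L + restrf with_j @: K)%VS.
  apply: shiftLL'.2 => m mL _; rewrite slow_shiftE ?neq_ij //.
  case: ifPn => [_|/negPn/eqP l0].
    by rewrite -[lower m]addr0 memv_add ?mem0v // -lowerfE memv_img.
  rewrite -[restr _ m]add0r memv_add ?mem0v // -restrfE memv_img //.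
  by rewrite /K memv_cap mL memv_ker lowerfE l0 eqxx.
apply: leq_trans (dimvS sub) _; apply: leq_trans (dimv_add_leqif _ _) _.
rewrite -(limg_ker_dim lowerf L) addnC leq_add2r.
by rewrite -(limg_ker_dim (restrf with_j) K) leq_addl.
Qed.

Lemma separating_lift B : separating L' B ->
  forall m, m \in L -> {in B, forall U, m U + raise_coef U * m (raise U) = 0} -> m = 0.
Proof.
move=> /separatingP sepB m mL fm; have [//|nz_m] := eqVneq m 0.
have := shiftLL'.1 _ mL nz_m; rewrite slow_shiftE ?neq_ij //.
have lower0 : {in B, forall U, lower m U = 0}.
  by move=> U UB; rewrite ffunE; case: ifP => // _; apply: fm.
case: ifPn => [nz_l /sepB/(_ lower0)/eqP|/negPn/eqP l0 /sepB r0].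
  by rewrite (negbTE nz_l).
have mJ : m \in vanishing with_j.
  rewrite /vanishing memv_ker restrfE r0 // => U UB; rewrite ffunE; case: ifP => // UJ.
  by have := fm U UB; rewrite raise_coef_with_j // mul0r addr0.
by rewrite -(lower_id mJ) l0.
Qed.

Lemma coord_basis_shift B : B \in coord_bases L' ->
  exists2 A, A \in coord_bases L &
    A = B \/
    (coord_weight index_sum B < coord_weight index_sum A)%N /\ A \notin coord_bases L'.
Proof.
move=> bB; have /coord_basesP[sepB cardB] := bB.
have [d dab sepd] := separating_choice (a := id) (b := raise) (separating_lift sepB).
set A := d @: B.
have cardA : #|A| = #|B|.
  apply/eqP; rewrite eqn_leq leq_imset_card cardB (leq_trans dim_shift_le) //.
  exact: dim_le_card_separating.
have bA : A \in coord_bases L.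
  by apply: coord_basis_of_separating; rewrite // cardA cardB dim_shift_le.
have injd : {in B &, injective d} by apply/imset_injP; rewrite cardA.
exists A => //.
have [d_id|] := boolP [forall (U | U \in B), d U == U].
  by left; rewrite -[RHS]imset_id; apply: eq_in_imset => U UB; apply/eqP/(forall_inP d_id).
rewrite negb_forall_in => /exists_inP[U0 U0B dU0]; right.
have dU0r : d U0 = raise U0 by case: (dab U0) dU0 => ->; rewrite ?eqxx.
have [U0J rU0J ltU0] : [/\ U0 \notin with_j, raise U0 \in with_j
    & (index_sum U0 < index_sum (raise U0))%N] by apply: raise_moved; rewrite -dU0r.
have mono g : (forall U, g U <= g (raise U))%N -> {in B, forall U, g U <= g (d U)}%N.
  by move=> g_raise U _; case: (dab U) => ->.
split; first by apply: (sum_lt_imset injd (mono _ index_sum_raise) U0B); rewrite dU0r.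
apply/negP=> bA'; have := sum_lt_imset injd (mono _ with_j_raise) U0B.
rewrite dU0r (negbTE U0J) rU0J -!card_setI_sum => /(_ isT).
rewrite (card_meet_coord_basis restr_stable_shift bA').
by rewrite -(card_meet_coord_basis restr_stable_shift bB) ltnn.
Qed.

Lemma coord_bases_shift_eq : coord_bases L' = coord_bases L -> L' = L.
Proof.
move=> eqB.
have meetL' A : A \in coord_bases L -> #|A :&: with_j| = \dim (restrf with_j @: L').
  by rewrite -eqB; apply: card_meet_coord_basis restr_stable_shift.
have stableL : (restrf with_j @: L <= L)%VS.
  by apply: restr_stable_of_card_meet => A B bA bB; rewrite !meetL'.
have [A bA eA] := exists_coord_basis_meet L with_j.
have restrJ : (restrf with_j @: L <= L')%VS.
  have /eqP <- : (restrf with_j @: L' == restrf with_j @: L)%VS.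
    by rewrite eqEdim restr_shift_sub -(meetL' A bA) eA leqnn.
  exact: restr_stable_shift.
have restrCJ : (restrf (~: with_j) @: L <= L')%VS.
  apply/subvP=> _ /memv_imgP[m mL ->].
  have m'L : restrf (~: with_j) m \in L by rewrite (subvP (restr_stableC stableL)) ?memv_img.
  have m'J : restrf (~: with_j) m \in vanishing with_j.
    by rewrite restrfE; have := restr_vanishing (~: with_j) m; rewrite setCK.
  have [->|nz] := eqVneq (restrf (~: with_j) m) 0; first exact: mem0v.
  by have := shiftLL'.1 _ m'L nz; rewrite slow_shiftE ?neq_ij // lower_id // nz.
apply/esym/eqP; rewrite eqEdim dim_shift_le andbT.
by apply: subv_trans (sub_restr_add L with_j) _; rewrite subv_add restrJ restrCJ.
Qed.

Lemma coord_potential_shift_lt :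
  L' != L -> (coord_potential index_sum L' < coord_potential index_sum L)%N.
Proof.
move=> neqL; apply: sum_expn_lt_dominated => //.
  by apply: contra neqL => /eqP/coord_bases_shift_eq ->.
move=> B; rewrite inE => /andP[nbB bB].
have [A bA [eAB|[ltBA nbA]]] := coord_basis_shift bB; first by rewrite -eAB bA in nbB.
by exists A; rewrite // inE nbA.
Qed.
End SlowShift.

Arguments index_sum {n} U.

Theorem theorem3p9 (F : fieldType) (n k : nat)
  (char2 : (2%:R : F) != 0)
  (L : {vspace extalg F n}) (HL : (L <= wedgek F n k)%VS)
  (I : {set 'I_n}) :
  ~ exists Ls : nat -> {vspace extalg F n},
      Ls 0%N = L /\
      forall s : nat, exists i j : 'I_n,
        [/\ i \in I, j \in I, (i < j)%N,
            is_slow_shift_space j i (Ls s) (Ls s.+1) & Ls s.+1 != Ls s].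
Proof.
move=> [Ls [_ shifts]].
apply: (@no_nat_descent (fun s => coord_potential index_sum (Ls s))) => s.
have [i [j [_ _ lt_ij shift_s neq_s]]] := shifts s.
exact: (coord_potential_shift_lt lt_ij shift_s neq_s).
Qed.
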